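(* For every $(s_0,p_0)\in G_2\setminus\{(0,0)\}$ there exist a finite Blaschke product $B$ of degree one or two with $B(0)=0$ and $\sigma\in\mathbb D\setminus\{0\}$ such that the map $\varphi(\lambda)=\big(B(\sqrt\lambda)+B(-\sqrt\lambda),\,B(\sqrt\lambda)B(-\sqrt\lambda)\big)$, $\lambda\in\mathbb D$, satisfies $\varphi(\sigma^2)=(s_0,p_0)$. Equivalently, writing $(s_0,p_0)=(t_1+t_2,t_1t_2)$ with $t_1,t_2\in\mathbb D$, there are such $B$ and $\sigma$ with $B(\sigma)=t_1$ and $B(-\sigma)=t_2$. *)

From mathcomp Require Import all_boot all_order all_algebra.
From mathcomp Require Import complex.
From mathcomp Require Import reals.
Set Implicit Arguments. Unset Strict Implicit. Unset Printing Implicit Defensive.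
Import Order.TTheory GRing.Theory Num.Theory.
Local Open Scope ring_scope.
Local Open Scope complex_scope.

Definition in_disc (R : realType) (z : R[i]) : Prop := `|z| < 1.

Definition G2 (R : realType) (s p : R[i]) : Prop :=
  exists z1 z2 : R[i], in_disc z1 /\ in_disc z2 /\ s = z1 + z2 /\ p = z1 * z2.

(* Finite Blaschke product with unimodular constant c and zeros zs (in D):
   B(z) = c * prod_{a in zs} (z - a) / (1 - conj(a) z). Its degree is size zs. *)
Definition blaschke (R : realType) (c : R[i]) (zs : seq R[i]) (z : R[i]) : R[i] :=
  c * \prod_(a <- zs) ((z - a) / (1 - a^* * z)).

Definition is_finite_blaschke (R : realType) (c : R[i]) (zs : seq R[i]) : Prop :=
  `|c| = 1 /\ all (fun a => `|a| < 1) zs.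

(* phi(lambda) = (B(sqrt l) + B(-sqrt l), B(sqrt l) B(-sqrt l)); this is independent
   of the choice of square root, we use the library's sqrtC. *)
Definition phi (R : realType) (B : R[i] -> R[i]) (l : R[i]) : R[i] * R[i] :=
  (B (sqrtC l) + B (- sqrtC l), B (sqrtC l) * B (- sqrtC l)).

(* Take B(z) = z (z - a) / (1 - a^* z) and put b = a^2, lam = sigma^2.  Then
   phi(lam) = (2 lam (1 - |b|) / (1 - b^* lam), lam (lam - b) / (1 - b^* lam)), so with
   k = 2 (1 - |b|) the equation phi(lam) = (s, p) amounts to
   k lam = s (1 - b^* lam) and b = lam - k p / s.
   For s != 0 let d = s - s^* p, choose lam = x d / |d| where x is the larger root of
   (4 - |s|^2) x^2 - 4 |d| x + |s|^2 - 4 |p|^2 = 0, and k = |s|^2 (1 - x^2) / (x |d|).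
   The first equation holds because lam d^* = x |d|, the quadratic equation gives
   |b| = 1 - k / 2, and 0 < x < 1, 0 < k <= 2 (so lam, b lie in the disc) follow from
   the bounds on |d| and |s^2 - 4 p| valid on G_2.  For s = 0 the map B(z) = z works. *)

From mathcomp Require Import all_boot all_order all_algebra.
From mathcomp Require Import complex reals.
From mathcomp Require Import ring lra.
Set Implicit Arguments. Unset Strict Implicit. Unset Printing Implicit Defensive.
Import Order.TTheory GRing.Theory Num.Theory Normc.
Local Open Scope ring_scope.
Local Open Scope complex_scope.

Section Disc.
Context {R : realType}.
Implicit Types z w : R[i].

Lemma in_disc_subr_neq0 w : in_disc w -> 1 - w != 0.
Proof.
rewrite /in_disc subr_eq0 => w_lt1.
by apply: contraTneq w_lt1 => <-; rewrite normr1 ltxx.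
Qed.

Lemma in_discM z w : in_disc z -> in_disc w -> in_disc (z * w).
Proof. by rewrite /in_disc normrM => z1 w1; apply: mulr_ilt1. Qed.

Lemma in_disc_conj z : in_disc z -> in_disc z^*.
Proof. by rewrite /in_disc norm_conjC. Qed.

Lemma in_disc_sqrtC z : in_disc z -> in_disc (sqrtC z).
Proof.
rewrite /in_disc -[in X in X -> _](sqrtCK z) normrX => z1.
by rewrite -(expr_lt1 (n := 2)).
Qed.
End Disc.


Section Blaschke.
Context {R : realType}.
Implicit Types a b z lam : R[i].

Lemma blaschke_id z : blaschke 1 [:: 0] z = z.
Proof. by rewrite /blaschke big_seq1 conjC0 mul0r !subr0 divr1 mul1r. Qed.

Lemma blaschke2E a z : blaschke 1 [:: 0; a] z = z * ((z - a) / (1 - a^* * z)).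
Proof. by rewrite /blaschke !big_cons big_nil conjC0 mul0r !subr0 divr1 mulr1 mul1r. Qed.

Lemma finite_blaschke_id : is_finite_blaschke 1 [:: 0 : R[i]].
Proof. by split; rewrite /= ?normr1 ?normr0 ?ltr01. Qed.

Lemma finite_blaschke2 a : in_disc a -> is_finite_blaschke 1 [:: 0; a].
Proof. by move=> a_disc; split; rewrite /= ?normr1 ?normr0 ?ltr01 ?andbT. Qed.

Lemma phi_blaschke_id lam : phi (blaschke 1 [:: 0]) lam = (0, - lam).
Proof. by rewrite /phi !blaschke_id subrr mulrN -expr2 sqrtCK. Qed.

Lemma phi_blaschke2 b lam : in_disc b -> in_disc lam ->
  phi (blaschke 1 [:: 0; sqrtC b]) lam =
    (2 * lam * (1 - `|b|) / (1 - b^*%R * lam), lam * (lam - b) / (1 - b^*%R * lam)).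
Proof.
move=> b1 lam1; rewrite /phi !blaschke2E.
set a := sqrtC b; set sig := sqrtC lam.
have aJa : `|b| = a * a^* by rewrite -normCK -normrX sqrtCK.
have asig1 : in_disc (a^* * sig) by apply: in_discM; [apply: in_disc_conj|]; apply: in_disc_sqrtC.
have den1 := in_disc_subr_neq0 asig1.
have den2 : 1 - a^* * - sig != 0.
  by rewrite mulrN; apply: in_disc_subr_neq0; rewrite /in_disc normrN.
rewrite aJa; have -> : lam = sig ^+ 2 by rewrite sqrtCK.
have -> : b = a ^+ 2 by rewrite sqrtCK.
have den : 1 - a^* ^+ 2 * sig ^+ 2 != 0.
  by rewrite (_ : 1 - _ = (1 - a^* * sig) * (1 - a^* * - sig)) ?mulf_neq0 //; ring.
by congr pair; rewrite ?rmorphXn /=; field; rewrite exprMn den den1 den2.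
Qed.
End Blaschke.


Section Modulus.
Context {R : realType}.
Implicit Types (z w : R[i]) (r : R).

Lemma normcE z : `|z| = (normc z)%:C.
Proof. by case: z. Qed.

Lemma normc_ge0 z : 0 <= normc z.
Proof. by rewrite -ler0c -normcE. Qed.

Lemma normc_sqr z : (normc z ^+ 2)%:C = z * z^*%R.
Proof. by rewrite rmorphXn /= -normcE normCK. Qed.

Lemma normc_sqrC z : (normc z)%:C ^+ 2 = z * z^*%R.
Proof. by rewrite -normc_sqr rmorphXn. Qed.

Lemma normc_conj z : normc z^* = normc z.
Proof. by apply: complexI; rewrite -!normcE norm_conjC. Qed.

Lemma realc_eq0 r : (r%:C == 0) = (r == 0).
Proof. by rewrite -(rmorph0 (real_complex R)) (inj_eq (@complexI _)). Qed.

Lemma normc_eq0 z : (normc z == 0) = (z == 0).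
Proof. by rewrite -realc_eq0 -normcE normr_eq0. Qed.

Lemma normc_gt0 z : (0 < normc z) = (z != 0).
Proof. by rewrite lt_def normc_eq0 normc_ge0 andbT. Qed.

Lemma normC_sqr_eq z r : 0 <= r -> z * z^*%R = (r ^+ 2)%:C -> `|z| = r%:C.
Proof.
rewrite -normc_sqr normcE => r_ge0 /complexI/eqP.
by rewrite eqrXn2 ?normc_ge0 // => /eqP ->.
Qed.

Lemma conjC_real r : (r%:C)^*%R = r%:C.
Proof. exact: conjc_real. Qed.

Lemma normc_real r : 0 <= r -> normc r%:C = r.
Proof. by move=> r_ge0; apply: complexI; rewrite -normcE ger0_norm ?ler0c. Qed.

Lemma normc_nat n : normc n%:R = n%:R :> R.
Proof. by rewrite -(rmorph_nat (real_complex R)) normc_real. Qed.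

Lemma normc_dist z w : normc z - normc w <= normc (z - w).
Proof. by rewrite -lecR rmorphB /= -!normcE lerB_dist. Qed.

Lemma in_discE z : in_disc z <-> normc z < 1.
Proof. by rewrite /in_disc normcE -ltcR. Qed.
End Modulus.


Lemma moduli_sum_lt (R : realFieldType) (n1 n2 S D W : R) :
  0 <= n1 < 1 -> 0 <= n2 < 1 -> D <= n1 * (1 - n2 ^+ 2) + n2 * (1 - n1 ^+ 2) ->
  W + S ^+ 2 = 2 * n1 ^+ 2 + 2 * n2 ^+ 2 -> 2 * D + W < 4 - S ^+ 2.
Proof.
move=> /andP[n1_ge0 n1_lt1] /andP[n2_ge0 n2_lt1] D_le W_par.
have : 0 < (1 - n1) * (1 - n2) * (1 - n1 * n2).
  by rewrite !mulr_gt0 ?subr_gt0 // (le_lt_trans _ n2_lt1) // ler_piMl // ltW.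
have : 0 <= (1 - n1 ^+ 2) * (1 - n2 ^+ 2) by apply: mulr_ge0; nra.
nra.
Qed.

(* After division by (4 - S^2)^2 this reads S^2 + 4 P^2 <= (4 + S^2) x^2 for the larger
   root x = (2 D + W) / (4 - S^2) of the quadratic below, which is equivalent to k <= 2. *)
Lemma larger_root_sqr_ge (R : realFieldType) (S P D W : R) :
  0 < S < 2 -> 0 <= P < 1 -> S * (1 - P) <= D -> 0 <= W -> 4 * P - S ^+ 2 <= W ->
  4 * D ^+ 2 = W ^+ 2 + (4 - S ^+ 2) * (S ^+ 2 - 4 * P ^+ 2) ->
  (S ^+ 2 + 4 * P ^+ 2) * (4 - S ^+ 2) ^+ 2 <= (4 + S ^+ 2) * (2 * D + W) ^+ 2.
Proof.
move=> /andP[S_gt0 S_lt2] /andP[P_ge0 P_lt1] D_ge W_ge0 W_ge D_W.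
have D_ge0 : 0 <= D by nra.
have S2_gt0 : 0 < 4 - S ^+ 2 by nra.
rewrite -subr_ge0.
have -> : (4 + S ^+ 2) * (2 * D + W) ^+ 2 - (S ^+ 2 + 4 * P ^+ 2) * (4 - S ^+ 2) ^+ 2 =
    2 * (4 - S ^+ 2) * (S ^+ 2 - 4 * P) * (S ^+ 2 + 4 * P)
    + (2 * W ^+ 2 + 4 * D * W) * (4 + S ^+ 2).
  have -> : (2 * D + W) ^+ 2 = 4 * D ^+ 2 + 4 * D * W + W ^+ 2 by ring.
  by rewrite D_W; ring.
have [P_le|P_gt] := lerP (4 * P) (S ^+ 2).
  have : 0 <= (S ^+ 2 - 4 * P) * (S ^+ 2 + 4 * P) by apply: mulr_ge0; nra.
  have : 0 <= 2 * W ^+ 2 + 4 * D * W by nra.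
  nra.
(* Here the right-hand side only decreases when D and W are replaced by their lower
   bounds, where it becomes a perfect square. *)
set w0 := 4 * P - S ^+ 2.
have w0_gt0 : 0 < w0 by rewrite /w0 subr_gt0.
have lower : 2 * w0 ^+ 2 + 4 * (S * (1 - P)) * w0 <= 2 * W ^+ 2 + 4 * D * W.
  have : w0 ^+ 2 <= W ^+ 2 by rewrite ler_sqr ?nnegrE // ltW.
  have : S * (1 - P) * w0 <= D * W by apply: ler_pM => //; nra.
  nra.
have -> : 2 * (4 - S ^+ 2) * (S ^+ 2 - 4 * P) * (S ^+ 2 + 4 * P) =
    4 * w0 * S * (1 - P) * (2 - S) ^+ 2 - (2 * w0 ^+ 2 + 4 * (S * (1 - P)) * w0) * (4 + S ^+ 2).
  by rewrite /w0; ring.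
have : 0 <= w0 * S * (1 - P) * (2 - S) ^+ 2 by rewrite !mulr_ge0 ?sqr_ge0 // ?subr_ge0 ltW.
nra.
Qed.

Lemma radius_weight_exist (R : realFieldType) (S P D W : R) :
  0 < S -> 0 <= P < 1 -> S * (1 - P) <= D -> 0 <= W -> 4 * P - S ^+ 2 <= W ->
  2 * D + W < 4 - S ^+ 2 ->
  4 * D ^+ 2 = W ^+ 2 + (4 - S ^+ 2) * (S ^+ 2 - 4 * P ^+ 2) ->
  exists x k : R, [/\ 0 < x < 1, 0 < k <= 2, k * (x * D) = S ^+ 2 * (1 - x ^+ 2) &
    (4 - S ^+ 2) * x ^+ 2 - 4 * D * x + S ^+ 2 - 4 * P ^+ 2 = 0].
Proof.
move=> S_gt0 /andP[P_ge0 P_lt1] D_ge W_ge0 W_ge sum_lt D_W.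
have D_gt0 : 0 < D by nra.
have S2_gt0 : 0 < 4 - S ^+ 2 by lra.
have S_lt2 : S < 2 by nra.
(* the larger root of the quadratic equation, whose discriminant is 4 W^2 by D_W *)
have [x x_def] : exists x, x = (2 * D + W) / (4 - S ^+ 2) by eexists.
have x_gt0 : 0 < x by rewrite x_def divr_gt0 //; lra.
have x_lt1 : x < 1 by rewrite x_def ltr_pdivrMr // mul1r.
have root : (4 - S ^+ 2) * x ^+ 2 - 4 * D * x + S ^+ 2 - 4 * P ^+ 2 = 0.
  have -> : (4 - S ^+ 2) * x ^+ 2 - 4 * D * x = (W ^+ 2 - 4 * D ^+ 2) / (4 - S ^+ 2).
    by rewrite x_def; field; lra.
  by rewrite D_W; field; lra.
have x2_ge : S ^+ 2 + 4 * P ^+ 2 <= (4 + S ^+ 2) * x ^+ 2.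
  rewrite x_def expr_div_n [leRHS]mulrA ler_pdivlMr ?exprn_gt0 //.
  by apply: larger_root_sqr_ge; rewrite ?S_gt0 ?P_ge0.
have xD_gt0 : 0 < x * D by rewrite mulr_gt0.
have num_gt0 : 0 < S ^+ 2 * (1 - x ^+ 2).
  by rewrite mulr_gt0 ?exprn_gt0 // subr_gt0 expr_lt1 // ltW.
exists x, (S ^+ 2 * (1 - x ^+ 2) / (x * D)).
rewrite x_gt0 x_lt1 divr_gt0 ?ler_pdivrMr ?divfK ?gt_eqF //=; split => //; nra.
Qed.

(* The left-hand side is |lam - k p / s|^2 written in terms of S = |s|, P = |p|, D = |d|. *)
Lemma weight_identity (R : realFieldType) (S P D x k : R) : 0 < S -> 0 < D -> 0 < x ->
  k * (x * D) = S ^+ 2 * (1 - x ^+ 2) ->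
  (4 - S ^+ 2) * x ^+ 2 - 4 * D * x + S ^+ 2 - 4 * P ^+ 2 = 0 ->
  x ^+ 2 - k * x / D * (1 - P ^+ 2 - D ^+ 2 / S ^+ 2) + k ^+ 2 * P ^+ 2 / S ^+ 2 =
  (1 - k / 2) ^+ 2.
Proof.
move=> S_gt0 D_gt0 x_gt0 k_def root; apply/eqP; rewrite -subr_eq0.
have -> : k = S ^+ 2 * (1 - x ^+ 2) / (x * D) by rewrite -k_def mulfK // mulf_neq0 ?gt_eqF.
rewrite -[X in _ == X](mulr0 (- (S ^+ 2 * (1 - x ^+ 2)) / (4 * D ^+ 2 * x ^+ 2))) -root.
by apply/eqP; field; rewrite !gt_eqF.
Qed.

Section SymmetricPair.
Context {R : realType}.
Implicit Types (s p : R[i]).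

Lemma normc_sym_lower s p : normc s * (1 - normc p) <= normc (s - s^*%R * p).
Proof. by have := normc_dist s (s^*%R * p); rewrite normcM normc_conj mulrBr mulr1. Qed.

Lemma normc_discr_lower s p : 4 * normc p - normc s ^+ 2 <= normc (s ^+ 2 - 4 * p).
Proof.
have := normc_dist (4 * p) (s ^+ 2).
by rewrite -[normc (4 * p - _)]normcN opprB !normcM normc_nat expr2.
Qed.

Lemma sym_moduli_identity s p :
  4 * normc (s - s^*%R * p) ^+ 2 =
  normc (s ^+ 2 - 4 * p) ^+ 2 + (4 - normc s ^+ 2) * (normc s ^+ 2 - 4 * normc p ^+ 2).
Proof.
apply: complexI.
rewrite !(rmorph_nat, rmorphXn, rmorphN, rmorphD, rmorphM) /= !normc_sqrC.
rewrite !(rmorph_nat, rmorphXn, rmorphN, rmorphD, rmorphM) /= conjCK.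
ring.
Qed.

Lemma sym_discr_bound (t1 t2 : R[i]) s p : in_disc t1 -> in_disc t2 ->
  s = t1 + t2 -> p = t1 * t2 ->
  2 * normc (s - s^*%R * p) + normc (s ^+ 2 - 4 * p) < 4 - normc s ^+ 2.
Proof.
move=> /in_discE n1_lt1 /in_discE n2_lt1 -> ->.
apply: (moduli_sum_lt (n1 := normc t1) (n2 := normc t2)).
- by rewrite normc_ge0.
- by rewrite normc_ge0.
- have -> : t1 + t2 - (t1 + t2)^*%R * (t1 * t2) =
            t1 * (1 - normc t2 ^+ 2)%:C + t2 * (1 - normc t1 ^+ 2)%:C.
    by rewrite !rmorphB !rmorph1 /= !normc_sqr rmorphD /=; ring.
  have sqr_le1 (t : R[i]) : normc t < 1 -> 0 <= 1 - normc t ^+ 2.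
    by move=> t_lt1; rewrite subr_ge0 exprn_ile1 ?normc_ge0 ?ltW.
  by rewrite (le_trans (le_normcD _ _)) // !normcM !normc_real ?sqr_le1.
- have -> : (t1 + t2) ^+ 2 - 4 * (t1 * t2) = (t1 - t2) ^+ 2 by ring.
  rewrite expr2 normcM -expr2; apply: complexI.
  rewrite !(rmorph_nat, rmorphXn, rmorphN, rmorphD, rmorphM) /= !normc_sqrC.
  by rewrite !(rmorphN, rmorphD) /=; ring.
Qed.
End SymmetricPair.


Section GeodesicPoint.
Context {R : realType}.
(* D stands for |s - s^* p|; lam_norm and d_lam say that lam = x (s - s^* p) / D. *)
Variables (s p lam : R[i]) (x D k : R).
Hypotheses (s_neq0 : s != 0) (x_gt0 : 0 < x) (D_gt0 : 0 < D).
Hypothesis lam_norm : lam * lam^*%R = (x ^+ 2)%:C.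
Hypothesis d_lam : s - s^*%R * p = (D / x)%:C * lam.
Hypothesis k_def : k * (x * D) = normc s ^+ 2 * (1 - x ^+ 2).
Hypothesis x_root :
  (4 - normc s ^+ 2) * x ^+ 2 - 4 * D * x + normc s ^+ 2 - 4 * normc p ^+ 2 = 0.

Let b := lam - k%:C * p / s.

Let lam_neq0 : lam != 0.
Proof.
apply: contra_neq (lt0r_neq0 (exprn_gt0 2 x_gt0)) => lam0.
by apply: complexI; rewrite -lam_norm lam0 mul0r.
Qed.

Let xC_neq0 : x%:C != 0. Proof. by rewrite realc_eq0 gt_eqF. Qed.
Let DC_neq0 : D%:C != 0. Proof. by rewrite realc_eq0 gt_eqF. Qed.

Let lam_conj : lam^*%R = (x ^+ 2)%:C / lam.
Proof. by rewrite -lam_norm mulrC mulKf. Qed.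

Let p_conj : p^*%R = (s^*%R - (D * x)%:C / lam) / s.
Proof.
have dJ := congr1 (fun z => z^*%R) d_lam.
rewrite /= rmorphB !rmorphM /= conjCK !conjC_real lam_conj in dJ.
have -> : (D * x)%:C / lam = s^*%R - s * p^*%R.
  by rewrite dJ !rmorphM fmorphV /=; field; rewrite lam_neq0 xC_neq0.
by field.
Qed.

Let p_lam : p = (s - (D / x)%:C * lam) / s^*%R.
Proof. by rewrite -d_lam; field; rewrite conjC_eq0. Qed.

Lemma geodesic_weight_eq : k%:C * lam = s * (1 - b^*%R * lam).
Proof.
have kC : k%:C = s * s^*%R * (1 - x ^+ 2)%:C / (x * D)%:C.
  by rewrite -normc_sqr -rmorphM -k_def rmorphM mulfK // rmorphM mulf_neq0.
rewrite /b rmorphB !rmorphM /= fmorphV conjC_real lam_conj p_conj kC.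
rewrite !(rmorph1, rmorphB, rmorphXn, rmorphM) /=; field.
by rewrite conjC_eq0 s_neq0 lam_neq0 DC_neq0 xC_neq0.
Qed.

Lemma geodesic_zero_sqr_norm : b * b^*%R = ((1 - k / 2) ^+ 2)%:C.
Proof.
have S_gt0 : 0 < normc s by rewrite normc_gt0.
rewrite -(weight_identity S_gt0 D_gt0 x_gt0 k_def x_root).
rewrite !(rmorph1, rmorph_nat, rmorphXn, rmorphN, rmorphD, rmorphM, fmorphV) /= !normc_sqrC.
rewrite conjC_real lam_conj p_conj /b p_lam !(rmorphXn, rmorphM, fmorphV) /=; field.
by rewrite conjC_eq0 s_neq0 lam_neq0 DC_neq0 xC_neq0.
Qed.
End GeodesicPoint.


Lemma G2_point_on_blaschke2_geodesic (R : realType) (s p : R[i]) : G2 s p -> s != 0 ->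
  exists lam b : R[i], [/\ in_disc lam, lam != 0, in_disc b &
    phi (blaschke 1 [:: 0; sqrtC b]) lam = (s, p)].
Proof.
move=> [t1 [t2 [t1_disc [t2_disc [s_def p_def]]]]] s_neq0.
have S_gt0 : 0 < normc s by rewrite normc_gt0.
have P_bounds : 0 <= normc p < 1.
  move: t1_disc t2_disc => /in_discE ? /in_discE ?.
  by rewrite normc_ge0 p_def normcM mulr_ilt1 ?normc_ge0.
have [x [k [/andP[x_gt0 x_lt1] /andP[k_gt0 k_le2] k_def x_root]]] :=
  radius_weight_exist S_gt0 P_bounds (normc_sym_lower s p) (normc_ge0 _)
    (normc_discr_lower s p) (sym_discr_bound t1_disc t2_disc s_def p_def) (sym_moduli_identity s p).
set d := s - s^*%R * p.
have D_gt0 : 0 < normc d.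
  apply: lt_le_trans (normc_sym_lower s p); rewrite mulr_gt0 // subr_gt0.
  by case/andP: P_bounds.
pose lam := (x / normc d)%:C * d.
have lam_norm : lam * lam^*%R = (x ^+ 2)%:C.
  rewrite /lam [(_ * d)^*%R]rmorphM /= conjC_real mulrACA -normc_sqr -!rmorphM; congr _%:C.
  by field; apply: lt0r_neq0.
have d_lam : d = (normc d / x)%:C * lam.
  rewrite /lam mulrA -rmorphM.
  have -> : normc d / x * (x / normc d) = 1 by field; rewrite !lt0r_neq0.
  by rewrite rmorph1 mul1r.
pose b := lam - k%:C * p / s.
have weight := geodesic_weight_eq s_neq0 x_gt0 D_gt0 lam_norm d_lam k_def.
have zero_norm := geodesic_zero_sqr_norm s_neq0 x_gt0 D_gt0 lam_norm d_lam k_def x_root.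
have lam_abs : `|lam| = x%:C by apply: normC_sqr_eq; rewrite ?ltW.
have b_abs : `|b| = (1 - k / 2)%:C by apply: normC_sqr_eq => //; lra.
have lam_disc : in_disc lam by rewrite /in_disc lam_abs ltcR.
have lam_neq0 : lam != 0 by rewrite -normr_eq0 lam_abs realc_eq0 gt_eqF.
have b_disc : in_disc b by rewrite /in_disc b_abs ltcR; lra.
exists lam, b; split => //.
have den : 1 - b^*%R * lam = k%:C * lam / s.
  by rewrite weight [RHS]mulrC mulKf.
have kC_neq0 : k%:C != 0 by rewrite realc_eq0 gt_eqF.
rewrite (phi_blaschke2 b_disc lam_disc) den b_abs /b.
rewrite !(rmorphB, rmorph1, rmorphM, fmorphV, rmorph_nat) /=.
by congr pair; field; rewrite kC_neq0 lam_neq0 s_neq0.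
Qed.

Theorem mainTheorem6 (R : realType) (s0 p0 : R[i]) :
  G2 s0 p0 -> (s0, p0) <> (0, 0) ->
  exists (c : R[i]) (zs : seq R[i]) (sigma : R[i]),
    [/\ is_finite_blaschke c zs,
        (size zs = 1)%N \/ (size zs = 2)%N,
        blaschke c zs 0 = 0,
        in_disc sigma /\ sigma != 0 &
        phi (blaschke c zs) (sigma ^+ 2) = (s0, p0)].
Proof.
move=> G2sp sp_neq0; have [s_eq0|s_neq0] := eqVneq s0 0.
  have p_neq0 : p0 != 0 by apply/eqP => p_eq0; apply: sp_neq0; rewrite s_eq0 p_eq0.
  have [t1 [t2 [t1_disc [t2_disc [_ p_def]]]]] := G2sp.
  have mp_disc : in_disc (- p0) by rewrite /in_disc normrN -/(in_disc p0) p_def; apply: in_discM.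
  exists 1, [:: 0], (sqrtC (- p0)); split.
  - exact: finite_blaschke_id.
  - by left.
  - by rewrite blaschke_id.
  - by split; [apply: in_disc_sqrtC | rewrite sqrtC_eq0 oppr_eq0].
  - by rewrite sqrtCK phi_blaschke_id opprK s_eq0.
have [lam [b [lam_disc lam_neq0 b_disc phi_lam]]] := G2_point_on_blaschke2_geodesic G2sp s_neq0.
exists 1, [:: 0; sqrtC b], (sqrtC lam); split.
- exact/finite_blaschke2/in_disc_sqrtC.
- by right.
- by rewrite blaschke2E mul0r.
- by split; [apply: in_disc_sqrtC | rewrite sqrtC_eq0].
- by rewrite sqrtCK.
Qed.
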